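(* Let $\mathscr T=(V,\mathcal E)$ be the directed Cartesian product of locally finite, rooted directed trees $\mathscr T_1,\dots,\mathscr T_d$, and let $S_{\boldsymbol\lambda}=(S_1,\dots,S_d)$ be a commuting multishift on $\mathscr T$. Let $E=\bigcap_{j=1}^d\ker S_j^*$ be the joint kernel of $S_{\boldsymbol\lambda}^*$. Then $S_{\boldsymbol\lambda}$ possesses the wandering subspace property, i.e. $$l^2(V)=\bigvee_{\alpha\in\mathbb N^d}S_{\boldsymbol\lambda}^{\alpha}E ,$$ where $\bigvee$ denotes the closed linear span.
   Context: A directed tree is a directed graph $(V,\mathcal E)$ ($\mathcal E\subseteq V\times V$ with no loops) that has no circuits, is connected (any two distinct vertices are joined by a path when orientation is ignored), and in which each vertex having an incoming edge has exactly one (its parent $\mathsf{par}(v)$). It is rooted if it has a (unique) vertex $\mathsf{root}$ with no incoming edge. $\mathsf{Chi}(u)=\{v:(u,v)\in\mathcal E\}$. The tree is locally finite if each $\mathsf{Chi}(u)$ is finite. Standing assumption: all directed trees are leafless (every $\mathsf{Chi}(u)\ne\emptyset$). Given rooted directed trees $\mathscr T_j=(V_j,\mathcal E_j)$ with roots $\mathsf{root}_j$, their directed Cartesian product is $\mathscr T=(V,\mathcal E)$ with $V=V_1\times\dots\times V_d$ (assumed countably infinite) and $(v,w)\in\mathcal E$ iff for some $k$, $(v_k,w_k)\in\mathcal E_k$ and $w_j=v_j$ for $j\ne k$. Put $\mathsf{root}=(\mathsf{root}_1,\dots,\mathsf{root}_d)$, $V^\circ=V\setminus\{\mathsf{root}\}$,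 $\mathsf{Chi}_j(v)=\{w\in V: w_j\in\mathsf{Chi}(v_j),\ w_k=v_k\ (k\neq j)\}$, and for $v_j\ne\mathsf{root}_j$ let $\mathsf{par}_j(v)$ be $v$ with $v_j$ replaced by $\mathsf{par}(v_j)$. $l^2(V)$ has orthonormal basis $\{e_v\}_{v\in V}$. Given positive numbers $\{\lambda^{(j)}_v: v\in V^\circ,1\le j\le d\}$, the multishift $S_{\boldsymbol\lambda}=(S_1,\dots,S_d)$ is $(S_jf)(v)=\lambda^{(j)}_vf(\mathsf{par}_j(v))$ if $v_j\ne\mathsf{root}_j$ and $0$ otherwise; each $S_j$ is assumed bounded on $l^2(V)$, so $S_je_v=\sum_{w\in\mathsf{Chi}_j(v)}\lambda^{(j)}_we_w$. Commuting means $S_iS_j=S_jS_i$ for all $i,j$; $S^\alpha_{\boldsymbol\lambda}=S_1^{\alpha_1}\cdots S_d^{\alpha_d}$. *)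

From Stdlib Require Import Relations ClassicalEpsilon.
From HB Require Import structures.
From mathcomp Require Import all_boot all_order all_algebra.
From mathcomp Require Import all_classical all_reals all_analysis.
From mathcomp Require Import complex.
Set Implicit Arguments. Unset Strict Implicit. Unset Printing Implicit Defensive.
Import Order.TTheory GRing.Theory Num.Theory.
Local Open Scope classical_set_scope.
Local Open Scope ring_scope.

Section Trees.
Variables (T : Type) (E : T -> T -> Prop).

Definition undirected_edge (u v : T) : Prop := E u v \/ E v u.

Definition rooted_directed_tree (rt : T) : Prop :=
  [/\ (forall v, ~ E v v),
      (forall v, ~ clos_trans T E v v),
      (forall u v, u <> v -> clos_refl_trans T undirected_edge u v),
      (forall u v w, E u w -> E v w -> u = v)
    & (forall u, ~ E u rt)].

Definition Chi (u : T) : set T := [set v | E u v].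
Definition locally_finite : Prop := forall u, finite_set (Chi u).
Definition leafless : Prop := forall u, Chi u !=set0.

(* the parent of a vertex (meaningful when it has an incoming edge) *)
Definition par (rt : T) (u : T) : T :=
  epsilon (inhabits rt) (fun p => E p u).
End Trees.

Definition Vtx (d : nat) (T : 'I_d -> Type) := forall j : 'I_d, T j.
HB.instance Definition _ d T := gen_eqMixin (@Vtx d T).
HB.instance Definition _ d T := gen_choiceMixin (@Vtx d T).

Section Multishift.
Variable R : realType.
Local Notation C := R[i].
Variables (d : nat) (T : 'I_d -> Type) (E : forall j, T j -> T j -> Prop)
          (root : forall j, T j).

Local Notation Vtx := (@Vtx d T).

Definition par_j (j : 'I_d) (v : Vtx) : Vtx :=
  @dfwith _ T v j (@par (T j) (@E j) (root j) (v j)).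

Definition sqmod (z : C) : R := complex.Re z ^+ 2 + complex.Im z ^+ 2.

Definition norm2 (f : Vtx -> C) : \bar R :=
  (\esum_(v in [set: Vtx]) (sqmod (f v))%:E)%E.

Definition l2 (f : Vtx -> C) : Prop := (norm2 f < +oo)%E.

(* sum of an (absolutely summable) real family over Vtx:
   sum of positive parts minus sum of negative parts *)
Definition rsum (u : Vtx -> R) : R :=
  fine (\esum_(v in [set: Vtx]) (Num.max (u v) 0)%:E)%E
  - fine (\esum_(v in [set: Vtx]) (Num.max (- u v) 0)%:E)%E.

Definition csum (u : Vtx -> C) : C :=
  Complex (rsum (fun v => complex.Re (u v))) (rsum (fun v => complex.Im (u v))).

(* inner product of l^2(V), linear in the first variable *)
Definition inner (f g : Vtx -> C) : C := csum (fun v => f v * conjc (g v)).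

Variable lambda : 'I_d -> Vtx -> R.

Definition S (j : 'I_d) (f : Vtx -> C) : Vtx -> C :=
  fun v => if pselect (v j = root j) is left _ then 0
           else ((lambda j v)%:C)%C * f (par_j j v).

Definition Spow (alpha : 'I_d -> nat) (f : Vtx -> C) : Vtx -> C :=
  foldr (fun j g => iter (alpha j) (S j) g) f (enum 'I_d).

Definition bounded_on_l2 (A : (Vtx -> C) -> Vtx -> C) : Prop :=
  exists M : R, forall f, l2 f -> (norm2 (A f) <= M%:E * norm2 f)%E.

(* ker S_j^* = { f in l^2 : S_j^* f = 0 }
             = { f in l^2 : <g, S_j^* f> = <S_j g, f> = 0 for all g in l^2 } *)
Definition ker_adj (j : 'I_d) : set (Vtx -> C) :=
  [set f | l2 f /\ forall g, l2 g -> inner (S j g) f = 0].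

Definition joint_kernel : set (Vtx -> C) :=
  [set f | l2 f /\ forall j, ker_adj j f].

Definition finite_lin_comb (A : set (Vtx -> C)) (h : Vtx -> C) : Prop :=
  exists (n : nat) (c : 'I_n -> C) (a : 'I_n -> Vtx -> C),
    (forall i, A (a i)) /\ h = (fun v => \sum_(i < n) c i * a i v).

Definition closed_span (A : set (Vtx -> C)) : set (Vtx -> C) :=
  [set f | l2 f /\ forall eps : R, 0 < eps ->
     exists h, finite_lin_comb A h /\ (norm2 (fun v => (f v - h v)%R) < eps%:E)%E].

Definition wandering_subspace_property : Prop :=
  [set f | l2 f] =
  closed_span [set h | exists (alpha : 'I_d -> nat) (e : Vtx -> C),
                        joint_kernel e /\ h = Spow alpha e].
End Multishift.

(* By density of finitely supported vectors it suffices that every basis vector e_v is a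
   finite linear combination of wandering vectors S^alpha e, e in the joint kernel E.
   Induct on the level |v| = sum_j depth(v_j); the level sets L_n are finite.  For x in
   L_(n+1), (S_j g)(x) only involves g on L_n, so a vector r supported on L_(n+1) lies in E
   as soon as it is orthogonal to the finitely many S_j e_w, w in L_n.  Projecting e_v,
   v in L_(n+1), orthogonally onto their span in l^2(L_(n+1)) gives e_v = r + sum c S_j e_w
   with r in E, and each S_j e_w is a combination of wandering vectors by induction, since
   by commutativity S_j maps S^alpha E into S^(alpha + eps_j) E. *)

From Stdlib Require Import Relations.
From mathcomp Require Import all_boot all_order all_algebra.
From mathcomp Require Import all_classical all_reals all_analysis.
From mathcomp Require Import finmap complex lra.
Set Implicit Arguments. Unset Strict Implicit. Unset Printing Implicit Defensive.
Import Order.TTheory GRing.Theory Num.Theory.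
Local Open Scope classical_set_scope.
Local Open Scope ring_scope.

Section RootedTree.
Variables (T : Type) (E : T -> T -> Prop) (rt : T).
Hypothesis tree : rooted_directed_tree E rt.

Let parent_uniq u v w : E u w -> E v w -> u = v.
Proof. by case: tree => _ _ _ + _; apply. Qed.

Let root_no_parent u : E u rt -> False.
Proof. by case: tree => _ _ _ _; apply. Qed.

Fixpoint at_depth (n : nat) (u : T) : Prop :=
  if n is m.+1 then exists2 p, at_depth m p & E p u else u = rt.

Lemma at_depth_uniq n m u : at_depth n u -> at_depth m u -> n = m.
Proof.
elim: n m u => [|n IHn] [|m] u //=.
- by move=> -> [p _ /root_no_parent].
- by move=> [p _ + ] eurt; rewrite eurt => /root_no_parent.
- by move=> [p Dp Epu] [q Dq /(parent_uniq Epu) epq]; rewrite (IHn m p) // epq.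
Qed.

Lemma at_depth_exists u : exists n, at_depth n u.
Proof.
have step x y : undirected_edge E x y -> (exists n, at_depth n x) -> exists n, at_depth n y.
  case=> [Exy|Eyx] [[|n] /= Dx]; first by exists 1%N; exists x.
  - by exists n.+2; exists x.
  - by move: Eyx; rewrite Dx => /root_no_parent.
  - by case: Dx => p Dp /(parent_uniq Eyx) ->; exists n.
have reach x y : clos_refl_trans T (undirected_edge E) x y ->
    (exists n, at_depth n x) -> exists n, at_depth n y.
  by elim=> {x y} [x y /step //|//|x y z _ IHxy _ IHyz /IHxy/IHyz].
have [->|urt] := pselect (u = rt); first by exists 0%N.
apply: (reach rt); last by exists 0%N.
by case: tree => _ _ + _ _; apply => /esym.
Qed.

Definition depth (u : T) : nat := projT1 (cid (at_depth_exists u)).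

Lemma depthP u : at_depth (depth u) u.
Proof. by rewrite /depth; case: cid. Qed.

Lemma at_depthE n u : at_depth n u -> depth u = n.
Proof. exact/at_depth_uniq/depthP. Qed.

Lemma depth_root : depth rt = 0%N.
Proof. exact: at_depthE. Qed.

Lemma depth_eq0 u : depth u = 0%N -> u = rt.
Proof. by move=> d0; have := depthP u; rewrite d0. Qed.

Lemma par_of_edge p u : E p u -> par E rt u = p.
Proof.
move=> Epu; apply: parent_uniq (Epu).
exact: ClassicalEpsilon.epsilon_spec (inhabits rt) (E^~ u) (ex_intro _ p Epu).
Qed.

Lemma par_edge_depth u : u <> rt -> E (par E rt u) u /\ depth u = (depth (par E rt u)).+1.
Proof.
move=> urt; have := depthP u; case: (depth u) => [/urt //|n /= [p Dp Epu]].
by rewrite (par_of_edge Epu) (at_depthE Dp).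
Qed.

Lemma finite_depth : locally_finite E -> forall n, finite_set [set u | depth u = n].
Proof.
move=> lfin; elim=> [|n IHn].
  by apply: sub_finite_set (finite_set1 rt) => u /= /depth_eq0.
apply: sub_finite_set (bigcup_finite IHn (fun p _ => lfin p)) => u /= du.
have urt : u <> rt by move=> eurt; move: du; rewrite eurt depth_root.
have [Epu dpu] := par_edge_depth urt.
by exists (par E rt u) => //=; move: du; rewrite dpu => -[].
Qed.

End RootedTree.

Section ProductLevels.
Variables (d : nat) (T : 'I_d -> Type) (E : forall j, T j -> T j -> Prop)
          (root : forall j, T j).
Hypothesis trees : forall j, rooted_directed_tree (@E j) (root j).
Local Notation V := (Vtx T).

Definition level (x : V) : nat := (\sum_(j < d) depth (trees j) (x j))%N.

Lemma par_j_eq j (x : V) : par_j E root j x j = par (@E j) (root j) (x j).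
Proof. exact: dfwith_in. Qed.

Lemma par_j_neq j k (x : V) : j != k -> par_j E root j x k = x k.
Proof. exact: dfwith_out. Qed.

Lemma level_par_j j (x : V) : x j <> root j -> level x = (level (par_j E root j x)).+1.
Proof.
move=> xj; rewrite /level (bigD1 j) //= [in RHS](bigD1 j) //= par_j_eq.
rewrite (par_edge_depth (trees j) xj).2 addSn; congr (_ + _)%N.+1.
by apply: eq_bigr => k kj; rewrite par_j_neq // eq_sym.
Qed.

Lemma level_eq0 (x : V) : level x = 0%N -> x = root.
Proof.
move=> l0; apply: functional_extensionality_dep => j.
apply: (depth_eq0 (tree := trees j)).
by apply/eqP; rewrite -leqn0 -l0 /level (bigD1 j) //=; apply: leq_addr.
Qed.

Lemma level_root : level root = 0%N.
Proof. by rewrite /level big1 // => j _; rewrite depth_root. Qed.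

Lemma dfwith_par_j j (x : V) : @dfwith _ T (par_j E root j x) j (x j) = x.
Proof.
by apply: functional_extensionality_dep => k; case: dfwithP => // k' kj; rewrite par_j_neq.
Qed.

Lemma finite_level : (forall j, locally_finite (@E j)) ->
  forall n, finite_set [set x : V | level x = n].
Proof.
move=> lfin; elim=> [|n IHn].
  by apply: sub_finite_set (finite_set1 (root : V)) => x /= /level_eq0.
have children_fin : finite_set (\bigcup_(j in [set: 'I_d])
    \bigcup_(w in [set x : V | level x = n]) (@dfwith _ T w j @` Chi (@E j) (w j))).
  apply: bigcup_finite => // j _; apply: bigcup_finite => // w _.
  exact/finite_image/lfin.
apply: sub_finite_set children_fin => x /= lx.
have [j xj] : exists j, x j <> root j.
  apply: contrapT => xroot; suff xr : x = root by move: lx; rewrite xr level_root.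
  by apply: functional_extensionality_dep => j; apply: contrapT => xj; apply: xroot; exists j.
exists j => //; exists (par_j E root j x) => /=.
  by move: lx; rewrite (level_par_j xj) => -[].
exists (x j); last exact: dfwith_par_j.
by rewrite /Chi /= par_j_eq; exact: (par_edge_depth (trees j) xj).1.
Qed.

End ProductLevels.

Lemma esum_fset_support (R : realType) (I : choiceType) (X : {fset I}) (a : I -> R) :
  (forall i, 0 <= a i) -> (forall i, i \notin X -> a i = 0) ->
  (\esum_(i in [set: I]) (a i)%:E)%E = (\sum_(i <- X) a i)%:E.
Proof.
move=> a_ge0 aX.
rewrite (esumID [set` X]); last by move=> i _; rewrite lee_fin.
rewrite [X in (_ + X)%E]esum1 ?adde0; last by move=> i [_ /negP/aX ->].
rewrite setTI esum_fset ?finite_fset //; last by move=> i _; rewrite lee_fin.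
by rewrite -fsbig_seq ?fset_uniq // sumEFin.
Qed.

Section SquareSummable.
Variables (R : realType) (d : nat) (T : 'I_d -> Type).
Local Notation V := (Vtx T).
Local Notation C := R[i].

Lemma sqmod_ge0 (z : C) : 0 <= sqmod z.
Proof. by rewrite /sqmod addr_ge0 // sqr_ge0. Qed.

Lemma sqmod0 : sqmod (0 : C) = 0.
Proof. by rewrite /sqmod /= expr0n /= addr0. Qed.

Lemma norm2_ge0 (f : V -> C) : (0 <= norm2 f)%E.
Proof. by apply: esum_ge0 => v _; rewrite lee_fin sqmod_ge0. Qed.

Lemma rsum_fset (X : {fset V}) (u : V -> R) : (forall v, v \notin X -> u v = 0) ->
  rsum u = \sum_(v <- X) u v.
Proof.
move=> uX; rewrite /rsum.
rewrite (esum_fset_support (X := X) (a := u^\+)) => [||v /uX]; first last.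
- by rewrite /funrpos => ->; rewrite maxxx.
- exact: funrpos_ge0.
rewrite (esum_fset_support (X := X) (a := u^\-)) => [||v /uX]; first last.
- by rewrite /funrneg => ->; rewrite oppr0 maxxx.
- exact: funrneg_ge0.
rewrite /= -sumrB; apply: eq_bigr => v _.
by rewrite -[in RHS](funrposBneg u).
Qed.

Lemma csum_fset (X : {fset V}) (u : V -> C) : (forall v, v \notin X -> u v = 0) ->
  csum u = \sum_(v <- X) u v.
Proof.
move=> uX; rewrite /csum !(rsum_fset (X := X)) => [|v /uX ->|v /uX ->] //.
have sum_parts s : \sum_(v <- s) u v =
    Complex (\sum_(v <- s) complex.Re (u v)) (\sum_(v <- s) complex.Im (u v)).
  by elim: s => [|v s IHs]; rewrite ?big_nil // !big_cons IHs; case: (u v).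
by rewrite sum_parts.
Qed.

Lemma inner_fset (X : {fset V}) (f g : V -> C) : (forall v, v \notin X -> g v = 0) ->
  inner f g = \sum_(v <- X) f v * conjc (g v).
Proof.
by move=> gX; rewrite /inner (csum_fset (X := X)) // => v /gX ->; rewrite conjc0 mulr0.
Qed.

Lemma l2_fset (X : {fset V}) (f : V -> C) : (forall v, v \notin X -> f v = 0) -> l2 f.
Proof.
move=> fX; rewrite /l2 /norm2 (esum_fset_support (X := X)) ?ltry // => [v|v /fX ->].
  exact: sqmod_ge0.
exact: sqmod0.
Qed.

Lemma l2_truncation (f : V -> C) (eps : R) : l2 f -> 0 < eps ->
  exists X : {fset V}, (norm2 (fun v => (f v - (if v \in X then f v else 0))%R) < eps%:E)%E.
Proof.
move=> lf eps_gt0.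
have nf_fin : norm2 f \is a fin_num by rewrite ge0_fin_numE ?norm2_ge0.
have sqmod_ge0E v : (0 <= (sqmod (f v))%:E)%E by rewrite lee_fin sqmod_ge0.
have : ((fine (norm2 f) - eps)%:E < norm2 f)%E.
  by rewrite -[X in (_ < X)%E](fineK nf_fin) lte_fin ltrBlDr ltrDl.
rewrite [X in (_ < X)%E]/norm2 /esum => /ereal_sup_gt[_ [A [finA _]] <-] headA.
exists (fset_set A).
have inA v : (v \in fset_set A) = (v \in A) by rewrite in_fset_set.
have splitA (g : V -> C) : norm2 g =
    (\sum_(v \in A) (sqmod (g v))%:E + \esum_(v in ~` A) (sqmod (g v))%:E)%E.
  rewrite /norm2 (esumID A) => [|v _]; last by rewrite lee_fin sqmod_ge0.
  by rewrite setTI setTI esum_fset // => v _; rewrite lee_fin sqmod_ge0.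
rewrite splitA fsbig1 ?add0e => [|v Av]; last by rewrite inA mem_set // subrr sqmod0.
rewrite (eq_esum (b := fun v => (sqmod (f v))%:E)) => [|v /= nAv]; last first.
  by rewrite inA memNset // subr0.
move: headA nf_fin; rewrite splitA.
have := fsume_ge0 (P := A) (fun v _ => sqmod_ge0E v).
have := esum_ge0 (S := ~` A) (fun v _ => sqmod_ge0E v).
case: (\sum_(v \in A) _)%E => [s||]; case: (esum _ _) => [t||] //=.
by move=> _ _; rewrite !lte_fin; lra.
Qed.

End SquareSummable.

Section FiniteInnerProduct.
Variables (R : rcfType) (I : eqType).
Local Notation C := R[i].
Implicit Types (s : seq I) (f g h : I -> C) (l : seq (C * (I -> C))).

Definition inner_seq s f g : C := \sum_(i <- s) f i * conjc (g i).

Definition lincomb l : I -> C := fun i => \sum_(a <- l) a.1 * a.2 i.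

Lemma inner_seqBl s f g h :
  inner_seq s (fun i => f i - g i) h = inner_seq s f h - inner_seq s g h.
Proof. by rewrite /inner_seq -sumrB; apply: eq_bigr => i _; rewrite mulrBl. Qed.

Lemma inner_seqDr s f g h :
  inner_seq s f (fun i => g i + h i) = inner_seq s f g + inner_seq s f h.
Proof. by rewrite /inner_seq -big_split; apply: eq_bigr => i _; rewrite rmorphD mulrDr. Qed.

Lemma inner_seqZl s c f h : inner_seq s (fun i => c * f i) h = c * inner_seq s f h.
Proof. by rewrite /inner_seq mulr_sumr; apply: eq_bigr => i _; rewrite mulrA. Qed.

Lemma inner_seqC s f g : inner_seq s f g = conjc (inner_seq s g f).
Proof.
rewrite /inner_seq rmorph_sum; apply: eq_bigr => i _.
by rewrite rmorphM /= conjcK mulrC.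
Qed.

Lemma eq_inner_seq s f f' g : {in s, f =1 f'} -> inner_seq s f g = inner_seq s f' g.
Proof. by move=> ff'; apply: eq_big_seq => i /ff' ->. Qed.

Lemma inner_seq_lincombl s l g :
  inner_seq s (lincomb l) g = \sum_(a <- l) a.1 * inner_seq s a.2 g.
Proof.
rewrite /inner_seq /lincomb; under eq_bigr => i _ do rewrite mulr_suml.
rewrite exchange_big; apply: eq_bigr => a _; rewrite mulr_sumr.
by apply: eq_bigr => i _; rewrite mulrA.
Qed.

Lemma inner_seq_lincombr s f l :
  inner_seq s f (lincomb l) = \sum_(a <- l) conjc a.1 * inner_seq s f a.2.
Proof.
rewrite inner_seqC inner_seq_lincombl rmorph_sum; apply: eq_bigr => a _.
by rewrite rmorphM /= -inner_seqC.
Qed.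

Lemma inner_seq_self_eq0 s f : inner_seq s f f = 0 -> forall g, inner_seq s g f = 0.
Proof.
rewrite /inner_seq => /eqP; rewrite psumr_eq0 => [/allP f0 g|i _]; last exact: mulcJ_ge0.
rewrite big_seq big1 // => i /f0 /=; rewrite mulf_eq0 => fi0.
suff -> : conjc (f i) = 0 by rewrite mulr0.
by case/orP: fi0 => /eqP // ->; rewrite conjc0.
Qed.

Lemma lincomb_cat l1 l2 i : lincomb (l1 ++ l2) i = lincomb l1 i + lincomb l2 i.
Proof. by rewrite /lincomb big_cat. Qed.

Lemma lincomb_cons a l i : lincomb (a :: l) i = a.1 * a.2 i + lincomb l i.
Proof. by rewrite /lincomb big_cons. Qed.

Lemma lincombZ c l i : lincomb [seq (c * a.1, a.2) | a <- l] i = c * lincomb l i.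
Proof. by rewrite /lincomb big_map mulr_sumr; apply: eq_bigr => a _; rewrite mulrA. Qed.

Lemma orthogonal_projection s (ws : seq (I -> C)) f : exists2 l,
  {subset [seq a.2 | a <- l] <= ws} &
  forall w, w \in ws -> inner_seq s (fun i => f i - lincomb l i) w = 0.
Proof.
elim: ws f => [|w ws IHws] f; first by exists [::].
(* With [f1], [w1] the residuals of [f], [w] against [ws], the residual [f1 - c * w1]
   stays orthogonal to [ws], and [c] makes it orthogonal to [w1], hence to [w]. *)
have [l1 l1ws f1ws] := IHws f; have [l2 l2ws w1ws] := IHws w.
pose f1 i := f i - lincomb l1 i; pose w1 i := w i - lincomb l2 i.
pose c := inner_seq s f1 w1 / inner_seq s w1 w1.
exists (l1 ++ (c, w) :: [seq (- c * a.1, a.2) | a <- l2]).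
  move=> u; rewrite map_cat mem_cat /= in_cons -map_comp.
  case/orP => [/l1ws uws|/orP[/eqP ->|/mapP[a la ->]]]; rewrite in_cons ?eqxx ?uws ?orbT //.
  by rewrite l2ws ?orbT // map_f.
have resE : (fun i => f i - lincomb (l1 ++ (c, w) :: [seq (- c * a.1, a.2) | a <- l2]) i)
    = (fun i => f1 i - c * w1 i).
  by apply: funext => i; rewrite lincomb_cat lincomb_cons lincombZ mulrBr mulNr opprD addrA.
have res_ws u : u \in ws -> inner_seq s (fun i => f1 i - c * w1 i) u = 0.
  by move=> uws; rewrite inner_seqBl inner_seqZl f1ws // w1ws // mulr0 subr0.
move=> u; rewrite resE in_cons => /orP[/eqP ->|]; last exact: res_ws.
have -> : w = (fun i => w1 i + lincomb l2 i) by apply: funext => i; rewrite subrK.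
rewrite inner_seqDr inner_seq_lincombr big_seq big1 ?addr0 => [|a la]; last first.
  by rewrite res_ws ?mulr0 // l2ws // map_f.
have [w1_0|w1_neq0] := eqVneq (inner_seq s w1 w1) 0; first exact: inner_seq_self_eq0.
by rewrite inner_seqBl inner_seqZl /c divfK // subrr.
Qed.

Definition indicator (w : I) : I -> C := fun i => (i == w)%:R.

Lemma sum_indicator s (F : I -> C) i : uniq s ->
  \sum_(w <- s) F w * indicator w i = if i \in s then F i else 0.
Proof.
elim: s => [|w s IHs]; first by rewrite big_nil.
rewrite big_cons in_cons /= => /andP[ws us]; rewrite IHs // /indicator.
have [->|_] := eqVneq i w; last by rewrite mulr0 add0r.
by rewrite (negbTE ws) mulr1 addr0.
Qed.

Definition lin_span (A : set (I -> C)) : set (I -> C) :=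
  [set h | exists2 l, (forall a, a \in l -> A a.2) & h = lincomb l].

Lemma subset_lin_span A : A `<=` lin_span A.
Proof.
move=> h Ah; exists [:: (1, h)] => [a|]; first by rewrite inE => /eqP ->.
by apply: funext => i; rewrite lincomb_cons /lincomb big_nil addr0 mul1r.
Qed.

Lemma lin_span_lincomb A l : (forall a, a \in l -> lin_span A a.2) -> lin_span A (lincomb l).
Proof.
elim: l => [|a l IHl] lA; first by exists [::].
have [la laA a2E] := lA a (mem_head _ _).
have [lb lbA lbE] : lin_span A (lincomb l).
  by apply: IHl => b bl; apply: lA; rewrite in_cons bl orbT.
exists ([seq (a.1 * b.1, b.2) | b <- la] ++ lb) => [b|].
  by rewrite mem_cat => /orP[/mapP[b' /laA ? ->]|/lbA].
by apply: funext => i; rewrite lincomb_cons lincomb_cat lincombZ lbE a2E.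
Qed.

End FiniteInnerProduct.

Arguments indicator {R I} w i.

Section CommutingPowers.
Variables (X : Type) (I : eqType) (A : I -> X -> X) (P : X -> Prop).
Hypothesis A_stable : forall j x, P x -> P (A j x).
Hypothesis A_comm : forall j k x, P x -> A j (A k x) = A k (A j x).

Definition multi_iter (l : seq I) (alpha : I -> nat) (x : X) : X :=
  foldr (fun j y => iter (alpha j) (A j) y) x l.

Definition incr_at (alpha : I -> nat) (k : I) : I -> nat :=
  fun i => (alpha i + (i == k))%N.

Lemma iter_stable j n x : P x -> P (iter n (A j) x).
Proof. by move=> Px; elim: n => //= n /A_stable. Qed.

Lemma multi_iter_stable l alpha x : P x -> P (multi_iter l alpha x).
Proof. by move=> Px; elim: l => //= j l /iter_stable. Qed.

Lemma iter_comm k j n x : P x -> A k (iter n (A j) x) = iter n (A j) (A k x).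
Proof. by move=> Px; elim: n => //= n <-; rewrite A_comm //; apply: iter_stable. Qed.

Lemma eq_multi_iter l alpha beta x :
  {in l, alpha =1 beta} -> multi_iter l alpha x = multi_iter l beta x.
Proof.
elim: l => //= j l IHl ab; rewrite ab ?mem_head // IHl // => i il.
by rewrite ab // in_cons il orbT.
Qed.

Lemma multi_iter0 l x : multi_iter l (fun=> 0%N) x = x.
Proof. by elim: l => //= j l ->. Qed.

Lemma multi_iterS k l alpha x : k \in l -> uniq l -> P x ->
  A k (multi_iter l alpha x) = multi_iter l (incr_at alpha k) x.
Proof.
move=> + + Px; elim: l => //= j l IHl; rewrite in_cons /incr_at => /orP[/eqP<-|kl] /andP[jl ul].
  rewrite eqxx addn1 /=; congr (A k (iter _ _ _)); apply: eq_multi_iter => i il.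
  by rewrite (negbTE (memPn jl i il)) addn0.
have /negbTE -> : j != k by apply: contraNneq jl => ->.
by rewrite addn0 iter_comm ?(IHl kl ul) //; apply: multi_iter_stable.
Qed.

End CommutingPowers.

Section Multishift.
Variables (R : realType) (d : nat) (T : 'I_d -> Type) (E : forall j, T j -> T j -> Prop)
          (root : forall j, T j) (lambda : 'I_d -> Vtx T -> R).
Local Notation V := (Vtx T).
Local Notation C := R[i].
Local Notation S := (S E root lambda).
Local Notation Spow := (Spow E root lambda).
Hypothesis trees : forall j, rooted_directed_tree (@E j) (root j).
Hypothesis lfin : forall j, locally_finite (@E j).
Hypothesis S_bounded : forall j, bounded_on_l2 (S j).
Hypothesis S_comm : forall k j f, l2 f -> S k (S j f) = S j (S k f).

Lemma S_lincomb j (l : seq (C * (V -> C))) :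
  S j (lincomb l) = lincomb [seq (a.1, S j a.2) | a <- l].
Proof.
apply: funext => v; rewrite /S /lincomb big_map /=.
case: pselect => _; first by rewrite big1 // => a _; rewrite mulr0.
by rewrite mulr_sumr; apply: eq_bigr => a _; rewrite mulrCA.
Qed.

Lemma finite_lin_comb_span (A : set (V -> C)) : lin_span A `<=` finite_lin_comb A.
Proof.
move=> _ [l lA ->]; pose a0 : C * (V -> C) := (0, fun=> 0).
exists (size l), (fun i => (nth a0 l i).1), (fun i => (nth a0 l i).2); split.
  by move=> i; apply: lA; rewrite mem_nth.
by apply: funext => v; rewrite /lincomb (big_nth a0) big_mkord.
Qed.

Lemma l2_S j f : l2 f -> l2 (S j f).
Proof.
move=> lf; have [M SM] := S_bounded j.
have nf_fin : norm2 f \is a fin_num by rewrite ge0_fin_numE ?norm2_ge0.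
by rewrite /l2 (le_lt_trans (SM f lf)) // -(fineK nf_fin) -EFinM ltry.
Qed.

Definition wandering_vectors : set (V -> C) :=
  [set h | exists (alpha : 'I_d -> nat) (e : V -> C),
            joint_kernel E root lambda e /\ h = Spow alpha e].

Lemma wandering_vectors_S j h : wandering_vectors h -> wandering_vectors (S j h).
Proof.
move=> [alpha [e [[le Je] ->]]]; exists (incr_at alpha j), e; split => //.
by rewrite (multi_iterS l2_S S_comm) ?mem_enum ?enum_uniq.
Qed.

Lemma lin_span_wandering_S j h :
  lin_span wandering_vectors h -> lin_span wandering_vectors (S j h).
Proof.
move=> [l lW ->]; rewrite S_lincomb; apply: lin_span_lincomb => _ /mapP[a la ->].
exact/subset_lin_span/wandering_vectors_S/lW.
Qed.

Definition level_set (n : nat) : {fset V} := fset_set [set x | level trees x = n].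

Lemma mem_level_set n x : (x \in level_set n) = (level trees x == n).
Proof.
rewrite in_fset_set; last exact: finite_level.
by apply/idP/eqP => [/set_mem //|lx]; exact: mem_set.
Qed.

Lemma S_at_level0 j g x : level trees x = 0%N -> S j g x = 0.
Proof. by move/level_eq0 => ->; rewrite /S; case: pselect. Qed.

Lemma S_at_levelS j g n x : level trees x = n.+1 ->
  S j g x = lincomb [seq (g w, S j (indicator w)) | w <- level_set n] x.
Proof.
move=> lx; rewrite /lincomb big_map /= /S; case: pselect => [_|xj].
  by rewrite big1 // => w _; rewrite mulr0.
under eq_bigr => w _ do rewrite mulrCA.
rewrite -mulr_sumr sum_indicator ?fset_uniq // mem_level_set.
by move: lx; rewrite (level_par_j trees xj) => -[->]; rewrite eqxx.
Qed.

Lemma S_indicator_support j w x :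
  S j (indicator w) x != 0 -> level trees x = (level trees w).+1.
Proof.
rewrite /S; case: pselect => [_|xj]; first by rewrite eqxx.
rewrite /indicator; have [<-|] := eqVneq (par_j E root j x) w; last by rewrite mulr0 eqxx.
by rewrite (level_par_j trees xj).
Qed.

Definition level_shifts (n : nat) : seq (V -> C) :=
  if n is m.+1 then [seq S j (indicator w) | j <- enum 'I_d, w <- level_set m] else [::].

Lemma level_shifts_support n u x :
  u \in level_shifts n -> x \notin level_set n -> u x = 0.
Proof.
case: n => [//|m] /allpairsP[[j w] [_ wm ->]] /=; rewrite !mem_level_set in wm *.
by move=> xn; apply/eqP; apply: contraNT xn => /S_indicator_support ->; rewrite (eqP wm).
Qed.

Lemma joint_kernel_level n r : (forall x, x \notin level_set n -> r x = 0) ->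
  {in level_shifts n, forall u, inner_seq (level_set n) r u = 0} ->
  joint_kernel E root lambda r.
Proof.
move=> rn r_perp; have lr := l2_fset rn.
split=> // j; split=> // g lg; rewrite (inner_fset _ rn) -/(inner_seq _ _ _).
case: n rn r_perp => [|m] rn r_perp.
  rewrite /inner_seq big_seq big1 // => x.
  by rewrite mem_level_set => /eqP /(S_at_level0 j g) ->; rewrite mul0r.
rewrite (eq_inner_seq (f' := lincomb [seq (g w, S j (indicator w)) | w <- level_set m]));
  last by move=> x; rewrite mem_level_set => /eqP /S_at_levelS.
rewrite inner_seq_lincombl big_map big_seq big1 // => w wm /=.
rewrite inner_seqC r_perp ?conjc0 ?mulr0 //.
by apply/allpairsP; exists (j, w); rewrite mem_enum.
Qed.

Lemma lin_span_indicator_level n :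
  {in level_shifts n, forall u, lin_span wandering_vectors u} ->
  forall v, level trees v = n -> lin_span wandering_vectors (indicator v).
Proof.
move=> shifts_span v lv.
have [l lshifts perp] := orthogonal_projection (level_set n) (level_shifts n) (indicator v).
pose r x := indicator v x - lincomb l x.
have r_supp x : x \notin level_set n -> r x = 0.
  move=> xn; have /negbTE xv : x != v by apply: contraNneq xn => ->; rewrite mem_level_set lv.
  rewrite /r /indicator xv /lincomb big_seq big1 ?subr0 // => a la.
  by rewrite (level_shifts_support _ xn) ?mulr0 // lshifts // map_f.
have rW : wandering_vectors r.
  exists (fun=> 0%N), r; split; first exact: joint_kernel_level r_supp perp.
  by rewrite [RHS]multi_iter0.
have -> : indicator v = lincomb ((1, r) :: l).
  by apply: funext => x; rewrite lincomb_cons mul1r /r subrK.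
apply: lin_span_lincomb => a; rewrite in_cons => /orP[/eqP -> | la]; first exact: subset_lin_span.
by apply: shifts_span; apply: lshifts; apply: map_f.
Qed.

Lemma lin_span_indicator v : lin_span wandering_vectors (indicator v).
Proof.
suff : forall n u, level trees u = n -> lin_span wandering_vectors (indicator u) by apply.
elim=> [|m IHm] u lu; apply: (lin_span_indicator_level _ lu) => // h.
move=> /allpairsP[[j w] [_ wm ->]]; apply: lin_span_wandering_S; apply: IHm.
by apply/eqP; rewrite -mem_level_set.
Qed.

End Multishift.

Unset Implicit Arguments.

Theorem mainTheorem1 (R : realType) (d : nat) (T : 'I_d -> Type)
    (E : forall j : 'I_d, T j -> T j -> Prop) (root : forall j : 'I_d, T j)
    (lambda : 'I_d -> Vtx T -> R) :
  (* each T_j is a rooted directed tree with root root_j, locally finite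
     and leafless *)
  (forall j, rooted_directed_tree (@E j) (root j)) ->
  (forall j, locally_finite (@E j)) ->
  (forall j, leafless (@E j)) ->
  (* V is countably infinite *)
  (exists e : nat -> Vtx T, bijective e) ->
  (* positive weights on V° *)
  (forall (j : 'I_d) (v : Vtx T), v <> (root : Vtx T) -> 0 < lambda j v) ->
  (* each S_j is bounded on l^2(V) *)
  (forall j, bounded_on_l2 (@S R d T E root lambda j)) ->
  (* S_lambda is commuting *)
  (forall (k j : 'I_d) (f : Vtx T -> R[i]), l2 f ->
     @S R d T E root lambda k (@S R d T E root lambda j f)
     = @S R d T E root lambda j (@S R d T E root lambda k f)) ->
  (* wandering subspace property *)
  @wandering_subspace_property R d T E root lambda.
Proof.
move=> trees lfin _ _ _ S_bounded S_comm.
apply/seteqP; split=> [f lf|f []//]; split=> // eps eps_gt0.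
have [X truncX] := l2_truncation lf eps_gt0.
exists (lincomb [seq (f w, indicator w) | w <- X]); split.
  apply: finite_lin_comb_span; apply: lin_span_lincomb => _ /mapP[w _ ->].
  exact: lin_span_indicator.
suff -> : (fun v => f v - lincomb [seq (f w, indicator w) | w <- X] v)
    = (fun v => f v - (if v \in X then f v else 0)) by [].
by apply: funext => v; rewrite /lincomb big_map sum_indicator ?fset_uniq.
Qed.
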